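(* Let $\mathcal{A}=\{1,\dots,K\}$ be a finite set of arms, each arm $i$ having a feature vector $\mathbf{x}_i\in\mathbb{R}^d$, and let $\boldsymbol{\theta}\in\mathbb{R}^d$ be an unknown parameter with mean rewards $\mu_i=\mathbf{x}_i^T\boldsymbol{\theta}$ and $\mu_*=\max_{i\in\mathcal{A}}\mu_i$. Fix a round $t$, a positive definite matrix $\mathbf{V}_t\in\mathbb{R}^{d\times d}$, estimates $\hat{\mu}_{i,t}\in\mathbb{R}$ for $i\in\mathcal{A}$, and $\beta>0$ such that $|\hat{\mu}_{i,t}-\mu_i|\le \beta\|\mathbf{x}_i\|_{\mathbf{V}_t^{-1}}$ for all $i\in\mathcal{A}$. Let $i_*\in\arg\max_{i\in\mathcal{A}}\big(\hat{\mu}_{i,t}-\beta\|\mathbf{x}_i\|_{\mathbf{V}_t^{-1}}\big)$, and for each $i\in\mathcal{A}$ define $$S_{i,t}=\beta\big(\|\mathbf{x}_i\|_{\mathbf{V}_t^{-1}}+\|\mathbf{x}_{i_*}\|_{\mathbf{V}_t^{-1}}\big)-\big(\hat{\mu}_{i_*,t}-\hat{\mu}_{i,t}\big).$$ Then: (1) if $S_{i,t}<0$, arm $i$ is suboptimal, i.e. $\mu_*-\mu_i>0$; (2) if $S_{i,t}\ge S_{j,t}\ge 0$, then $\hat{\mu}_{i,t}+\beta\|\mathbf{x}_i\|_{\mathbf{V}_t^{-1}}\ge \hat{\mu}_{j,t}+\beta\|\mathbf{x}_j\|_{\mathbf{V}_t^{-1}}$.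
   Context: For a positive definite matrix $\mathbf{M}$ and vector $\mathbf{x}$, $\|\mathbf{x}\|_{\mathbf{M}}=\sqrt{\mathbf{x}^T\mathbf{M}\mathbf{x}}$. In the paper $\mathbf{V}_t$ is the regularized Gram matrix of selected feature vectors and $\hat{\mu}_{i,t}=\mathbf{x}_i^T\hat{\boldsymbol{\theta}}_t$ with $\hat{\boldsymbol{\theta}}_t$ the least-squares estimate; the lemma only uses that $\mathbf{V}_t$ is positive definite and the stated confidence-bound inequality. *)

From HB Require Import structures.
From mathcomp Require Import all_boot all_order all_algebra.
Set Implicit Arguments. Unset Strict Implicit. Unset Printing Implicit Defensive.
Import Order.TTheory GRing.Theory Num.Theory.
Local Open Scope ring_scope.

Definition mnorm (R : rcfType) (d : nat) (M : 'M[R]_d) (x : 'cV[R]_d) : R :=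
  Num.sqrt ((x^T *m M *m x) 0 0).

Definition posdef (R : rcfType) (d : nat) (M : 'M[R]_d) : Prop :=
  M^T = M /\ forall x : 'cV[R]_d, x != 0 -> 0 < (x^T *m M *m x) 0 0.

Definition mean_reward (R : rcfType) (d : nat) (x : 'cV[R]_d) (theta : 'cV[R]_d) : R :=
  (x^T *m theta) 0 0.

(* mu_* = max over the K = n.+1 arms *)
Definition mu_star (R : rcfType) (n : nat) (mu : 'I_n.+1 -> R) : R :=
  \big[Num.max/mu ord0]_(i < n.+1) mu i.

From HB Require Import structures.
From mathcomp Require Import all_boot all_order all_algebra.
Import Order.TTheory GRing.Theory Num.Theory.
Local Open Scope ring_scope.
From mathcomp Require Import lra.

(* Both claims are bookkeeping on confidence intervals.  If [S i < 0], the
   lower confidence bound of [istar] lies above the upper confidence bound of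
   [i], so [mu i < mu istar <= mu_*].  And in [S i] the terms involving [istar]
   do not depend on [i], so [S i] is the upper confidence bound of [i] shifted
   by a constant, and comparing [S i] with [S j] compares those bounds.
   Neither claim needs positive definiteness, [0 < beta], the choice of
   [istar] as a maximiser, or [0 <= S j]. *)

Lemma le_mu_star (R : rcfType) (n : nat) (mu : 'I_n.+1 -> R) (k : 'I_n.+1) :
  mu k <= mu_star mu.
Proof. exact: le_bigmax. Qed.

Lemma mu_star_gap_gt0 {R : rcfType} {n : nat} (mu : 'I_n.+1 -> R) (i k : 'I_n.+1) :
  mu i < mu k -> 0 < mu_star mu - mu i.
Proof. by move=> lt_ik; rewrite subr_gt0 (lt_le_trans lt_ik) ?le_mu_star. Qed.

Lemma confidence_bounds (R : realDomainType) (muhat mu w : R) :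
  `|muhat - mu| <= w -> muhat - w <= mu <= muhat + w.
Proof. by rewrite distrC ler_distl. Qed.

Lemma lt_of_disjoint_confidence (R : realDomainType) (muhat_i mu_i w_i muhat_k mu_k w_k : R) :
  `|muhat_i - mu_i| <= w_i -> `|muhat_k - mu_k| <= w_k ->
  muhat_i + w_i < muhat_k - w_k -> mu_i < mu_k.
Proof.
move=> /confidence_bounds/andP[_ ub_i] /confidence_bounds/andP[lb_k _] disj.
by rewrite (le_lt_trans ub_i) // (lt_le_trans disj).
Qed.

Theorem lemma1 (R : rcfType) (d n : nat)
  (x : 'I_n.+1 -> 'cV[R]_d) (theta : 'cV[R]_d) (V : 'M[R]_d)
  (muhat : 'I_n.+1 -> R) (beta : R) (istar : 'I_n.+1) :
  posdef V ->
  0 < beta ->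
  (forall i, `|muhat i - mean_reward (x i) theta| <= beta * mnorm (invmx V) (x i)) ->
  (forall j, muhat j - beta * mnorm (invmx V) (x j)
             <= muhat istar - beta * mnorm (invmx V) (x istar)) ->
  let S := fun i => beta * (mnorm (invmx V) (x i) + mnorm (invmx V) (x istar))
                    - (muhat istar - muhat i) in
  (forall i, S i < 0 ->
     mu_star (fun k => mean_reward (x k) theta) - mean_reward (x i) theta > 0) /\
  (forall i j, S j <= S i -> 0 <= S j ->
     muhat j + beta * mnorm (invmx V) (x j) <= muhat i + beta * mnorm (invmx V) (x i)).
Proof.
move=> _ _ conf _ S.
set w := fun i => beta * mnorm (invmx V) (x i).
have S_ucb i : S i = muhat i + w i - (muhat istar - w istar).
  by rewrite /S /w; lra.
split=> [i S_lt0 | i j].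
- apply: (mu_star_gap_gt0 _ _ istar).
  apply: lt_of_disjoint_confidence (conf i) (conf istar) _.
  by rewrite -subr_lt0 -/(w i) -/(w istar) -S_ucb.
- by rewrite !S_ucb lerD2r.
Qed.
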